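(* Fix $0<\alpha<1$, $\lambda>1$, $0<r_0<1$ and $0<\mu<1$. There is a constant $C_3>0$ such that the following holds. Let $s(t)=(s_1(t),s_2(t))$ and $\tilde s(t)=(\tilde s_1(t),\tilde s_2(t))$ be solutions of $$\dot s_1=s_1\Bigl(\tfrac{s_1^2+s_2^2}{r_0}\Bigr)^{\alpha}\log\lambda,\qquad \dot s_2=-s_2\Bigl(\tfrac{s_1^2+s_2^2}{r_0}\Bigr)^{\alpha}\log\lambda$$ where $T>0$ is such that $s(t)$ lies in $D_{r_0/2}=\{s_1^2+s_2^2\le r_0^2/4\}$ for all $t\in[0,T]$ while the trajectory is outside $D_{r_0/2}$ at times $-1$ and $T+1$; let $T_1=T/2$ and $\Delta s_j(t)=\tilde s_j(t)-s_j(t)$. Assume $s_1(t)\neq0\neq s_2(t)$, that $\Delta s_2(t)>0$ and $|\Delta s_1(t)|\le\mu\,\Delta s_2(t)$ for $t\in[0,T]$, and that $\bigl|\frac{\Delta s_2(0)}{s_2(0)}\bigr|<\frac{1-\mu}{72}$. Then for all $T_1<t<T$, $$\Delta s_2(t)<C_3\,\Delta s_2(T_1).$$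
   Context: The system is the slow-down vector field in the region where the slow-down function equals $\psi(u)=(u/r_0)^\alpha$; $\lambda$ is the largest eigenvalue of the toral automorphism being slowed down. The constant $C_3$ is uniform over all such pairs of solutions. *)

From HB Require Import structures.
From mathcomp Require Import all_boot all_order all_algebra.
From mathcomp Require Import all_classical all_reals all_analysis.
Set Implicit Arguments. Unset Strict Implicit. Unset Printing Implicit Defensive.
Import Order.TTheory GRing.Theory Num.Theory.
Import numFieldNormedType.Exports.
Local Open Scope ring_scope.

Definition slow_factor (R : realType) (alpha r0 lam x y : R) : R :=
  ((x ^+ 2 + y ^+ 2) / r0) `^ alpha * ln lam.

Definition slow_solution_on (R : realType) (alpha r0 lam : R)
    (s1 s2 : R -> R) (P : R -> Prop) : Prop :=
  forall t : R, P t ->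
    is_derive t 1 s1 (s1 t * slow_factor alpha r0 lam (s1 t) (s2 t)) /\
    is_derive t 1 s2 (- (s2 t * slow_factor alpha r0 lam (s1 t) (s2 t))).

From HB Require Import structures.
From mathcomp Require Import all_boot all_order all_algebra.
From mathcomp Require Import all_classical all_reals all_analysis.
From mathcomp Require Import ring lra.
Import Order.TTheory GRing.Theory Num.Theory.
Import numFieldNormedType.Exports.
Local Open Scope ring_scope.

(* The gap Delta s_2 is nonincreasing on [0, T], so C_3 = 2 works and only the
   cone condition (weakened to |Delta s_1| <= Delta s_2) is needed.
   Indeed (Delta s_2)' = -(F(s~) - F(s)) with F(x, y) = y ((x^2 + y^2)/r0)^alpha log lambda,
   and F is nondecreasing along the cone |Delta x| <= Delta y: for y > 0 the cubic
   y (x^2 + y^2) increases along it and the sublinear power t^alpha preserves this,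
   for y < 0 use the symmetry F(x, -y) = -F(x, y), and F has the sign of y. *)

Section SlowDownGap.
Variable R : realType.

Lemma cubic_le_cone (a b x z : R) :
  0 <= a -> a <= b -> `|x| <= `|z| + (b - a) ->
  a * (x ^+ 2 + a ^+ 2) <= b * (z ^+ 2 + b ^+ 2).
Proof.
move=> a0 ab hx.
rewrite -(real_normK (num_real x)) -(real_normK (num_real z)).
have x0 := normr_ge0 x; have z0 := normr_ge0 z.
move: hx x0 z0; move: `|x| `|z| => v w hvw v0 w0.
have hv2 : a * v ^+ 2 <= a * (w + (b - a)) ^+ 2.
  by apply: ler_wpM2l => //; rewrite ler_sqr ?nnegrE //; lra.
have gap : b * (w ^+ 2 + b ^+ 2) - a * ((w + (b - a)) ^+ 2 + a ^+ 2)
           = (b - a) * ((w - a) ^+ 2 + b ^+ 2 + a ^+ 2) by ring.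
have : 0 <= (b - a) * ((w - a) ^+ 2 + b ^+ 2 + a ^+ 2).
  by apply: mulr_ge0; [lra | rewrite !addr_ge0 // sqr_ge0].
lra.
Qed.

Lemma ler_pM_powR (al a b p q : R) :
  0 <= al -> al <= 1 -> 0 < a -> a <= b -> 0 <= p -> 0 <= q ->
  a * q <= b * p -> a * q `^ al <= b * p `^ al.
Proof.
move=> al0 al1 a0 ab p0 q0 hqp.
have pal0 := powR_ge0 p al.
have [qp | pq] := leP q p.
  have : q `^ al <= p `^ al by apply: ge0_ler_powR.
  nra.
have p_gt0 : 0 < p by rewrite lt_neqAle p0 andbT; apply/eqP => p_eq0; nra.
have q_pq : q = p * (q / p) by rewrite mulrC divfK // gt_eqF.
have qp1 : 1 <= q / p by rewrite ler_pdivlMr // mul1r ltW.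
have sublin : (q / p) `^ al <= q / p by apply: ler1_powR.
have aqp : a * (q / p) <= b by rewrite mulrA ler_pdivrMr.
rewrite q_pq powRM ?divr_ge0 //.
have : 0 <= (q / p - (q / p) `^ al) * (a * p `^ al) by apply: mulr_ge0; nra.
have : 0 <= (b - a * (q / p)) * p `^ al by apply: mulr_ge0; lra.
nra.
Qed.

Lemma slow_factor_mul_le_cone (alpha r0 lam x y z w : R) :
  0 <= alpha -> alpha <= 1 -> 1 <= lam -> 0 < r0 ->
  y < w -> `|z - x| <= w - y ->
  y * slow_factor alpha r0 lam x y <= w * slow_factor alpha r0 lam z w.
Proof.
move=> al0 al1 lam1 r0_gt0 yw hzx.
have hx : `|x| <= `|z| + (w - y).
  by have := lerB_dist x z; rewrite distrC; lra.
have hz : `|z| <= `|x| + (w - y) by have := lerB_dist z x; lra.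
have r0V : 0 <= r0^-1 by rewrite invr_ge0 ltW.
have sq0 (u v : R) : 0 <= (u ^+ 2 + v ^+ 2) / r0.
  by rewrite divr_ge0 ?addr_ge0 ?sqr_ge0 // ltW.
rewrite /slow_factor !mulrA; apply: ler_wpM2r; first by rewrite ln_ge0.
have [y_gt0 | y_le0] := ltP 0 y.
  apply: ler_pM_powR; rewrite ?sq0 //; try lra.
  by rewrite !mulrA ler_wpM2r // cubic_le_cone //; lra.
have [w_lt0 | w_ge0] := ltP w 0.
  have : - w * ((z ^+ 2 + w ^+ 2) / r0) `^ alpha
         <= - y * ((x ^+ 2 + y ^+ 2) / r0) `^ alpha.
    apply: ler_pM_powR; rewrite ?sq0 //; try lra.
    rewrite !mulrA ler_wpM2r // -(sqrrN w) -(sqrrN y) cubic_le_cone //; lra.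
  lra.
have := powR_ge0 ((x ^+ 2 + y ^+ 2) / r0) alpha.
have := powR_ge0 ((z ^+ 2 + w ^+ 2) / r0) alpha.
nra.
Qed.

Lemma derive_le0_nonincreasing (f f' : R -> R) (a b : R) :
  (forall x, a < x < b -> is_derive x 1 f (f' x)) ->
  (forall x, a < x < b -> f' x <= 0) ->
  {in `]a, b[ &, {homo f : x y /~ x <= y}}.
Proof.
move=> df df_le0.
have df_itv x : x \in `]a, b[ -> is_derive x 1 f (f' x) by rewrite in_itv => /df.
apply: ler0_derive1_le_oo.
- by move=> x /df_itv fx; apply: ex_derive.
- by move=> x xab; have fx := df_itv x xab; rewrite derive1E derive_val df_le0 -?in_itv.
- move=> x; rewrite inE /= => /df_itv fx.
  exact/differentiable_continuous/derivable1_diffP/ex_derive.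
Qed.

Lemma slow_solution_on_sub (alpha r0 lam : R) (s1 s2 : R -> R)
    (P Q : R -> Prop) :
  (forall t, Q t -> P t) ->
  slow_solution_on alpha r0 lam s1 s2 P -> slow_solution_on alpha r0 lam s1 s2 Q.
Proof. by move=> QP sol t /QP /sol. Qed.

Lemma slow_gap_nonincreasing (alpha r0 lam a b : R)
    (s1 s2 st1 st2 : R -> R) :
  0 <= alpha -> alpha <= 1 -> 1 <= lam -> 0 < r0 ->
  slow_solution_on alpha r0 lam s1 s2 (fun t => a < t < b) ->
  slow_solution_on alpha r0 lam st1 st2 (fun t => a < t < b) ->
  (forall t, a < t < b -> s2 t < st2 t /\ `|st1 t - s1 t| <= st2 t - s2 t) ->
  {in `]a, b[ &, {homo st2 - s2 : x y /~ x <= y}}.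
Proof.
move=> al0 al1 lam1 r0_gt0 sol sol' cone.
pose F u v := v * slow_factor alpha r0 lam u v.
apply: (derive_le0_nonincreasing (st2 - s2)
          (fun t => - F (st1 t) (st2 t) - - F (s1 t) (s2 t))).
- move=> t tab; have [_ ds2] := sol t tab; have [_ dst2] := sol' t tab.
  exact: is_deriveB.
- move=> t tab; have [s2_lt gap] := cone t tab.
  have : F (s1 t) (s2 t) <= F (st1 t) (st2 t) by exact: slow_factor_mul_le_cone.
  lra.
Qed.

End SlowDownGap.

Theorem lemma6p5 (R : realType) (alpha lam r0 mu : R) :
  0 < alpha -> alpha < 1 -> 1 < lam -> 0 < r0 -> r0 < 1 -> 0 < mu -> mu < 1 ->
  exists C3 : R, 0 < C3 /\
  forall (T : R) (s1 s2 st1 st2 : R -> R),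
    0 < T ->
    slow_solution_on alpha r0 lam s1 s2 (fun t => -1 <= t <= T + 1) ->
    slow_solution_on alpha r0 lam st1 st2 (fun t => 0 <= t <= T) ->
    (forall t, 0 <= t <= T -> s1 t ^+ 2 + s2 t ^+ 2 <= r0 ^+ 2 / 4) ->
    r0 ^+ 2 / 4 < s1 (-1) ^+ 2 + s2 (-1) ^+ 2 ->
    r0 ^+ 2 / 4 < s1 (T + 1) ^+ 2 + s2 (T + 1) ^+ 2 ->
    (forall t, 0 <= t <= T -> s1 t != 0 /\ s2 t != 0) ->
    (forall t, 0 <= t <= T ->
       0 < st2 t - s2 t /\ `|st1 t - s1 t| <= mu * (st2 t - s2 t)) ->
    `|(st2 0 - s2 0) / s2 0| < (1 - mu) / 72 ->
    forall t, T / 2 < t < T ->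
      st2 t - s2 t < C3 * (st2 (T / 2) - s2 (T / 2)).
Proof.
move=> al0 al1 lam1 r0_gt0 _ _ mu1.
exists 2; split=> // T s1 s2 st1 st2 T_gt0 sol sol' _ _ _ _ cone _ t /andP[T2t tT].
have sol_s : slow_solution_on alpha r0 lam s1 s2 (fun u => 0 < u < T).
  by apply: slow_solution_on_sub sol => u /andP[u0 uT]; apply/andP; split; lra.
have sol_st : slow_solution_on alpha r0 lam st1 st2 (fun u => 0 < u < T).
  by apply: slow_solution_on_sub sol' => u /andP[u0 uT]; rewrite !ltW.
have cone_in u : 0 < u < T -> s2 u < st2 u /\ `|st1 u - s1 u| <= st2 u - s2 u.
  move=> /andP[u0 uT]; have /cone[gap_gt0 gap_le] : 0 <= u <= T by rewrite !ltW.
  by rewrite -subr_gt0; split => //; nra.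
have mono := @slow_gap_nonincreasing R alpha r0 lam 0 T s1 s2 st1 st2
  (ltW al0) (ltW al1) (ltW lam1) r0_gt0 sol_s sol_st cone_in.
have gap_t : st2 t - s2 t <= st2 (T / 2) - s2 (T / 2).
  by apply: mono; rewrite ?in_itv /= ?ltW //; apply/andP; split; lra.
have /cone_in[T2_gap_gt0 _] : 0 < T / 2 < T by apply/andP; split; lra.
lra.
Qed.
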